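(* Let $G$ be an $n$-vertex near triangulation that is either $K_4$ (embedded with a triangle as outer cycle and one interior vertex) or $G_6^3$, let $C$ be its outer cycle, and let $v$ be a vertex of $C$ with $d(v)=3$ that has a neighbor in $V(G)\setminus V(C)$. Then there exists an orientation $D$ of $G$ with $\mathrm{diam}(D)=\overrightarrow{\mathrm{diam}}(G)=\frac{n}{2}+1$ such that $\max\{d_D(u,v),d_D(v,u)\}\le \frac{n}{2}$ for all $u\in V(G)$.
   Context: A near triangulation is a plane graph in which every face except possibly the outer face is bounded by a triangle; its outer cycle bounds the outer face. $G_6^3$ is the plane graph on vertices $a,b,c,x,y,z$ with edges $ab,bc,ca,xa,xb,xc,by,cy,yz,bz$, embedded with outer cycle $abzyca$, interior vertex $x$, and inner faces $abx,bcx,cax,bcy,byz$. For a directed graph $D$, $d_D(u,v)$ is the length of a shortest directed path from $u$ to $v$ and $\mathrm{diam}(D)=\max_{u,v}d_D(u,v)$; $\overrightarrow{\mathrm{diam}}(G)$ is the minimum of $\mathrm{diam}(D)$ over strongly connected orientations $D$ of $G$. *)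

From mathcomp Require Import all_boot all_order.
Set Implicit Arguments. Unset Strict Implicit. Unset Printing Implicit Defensive.

Definition deg (T : finType) (e : rel T) (v : T) : nat := #|[set w | e v w]|.

Definition is_orientation (T : finType) (e : rel T) (A : {set T * T}) : bool :=
  [forall u, forall v, ((u, v) \in A) ==> e u v] &&
  [forall u, forall v, e u v ==> (((u, v) \in A) (+) ((v, u) \in A))].

Definition arc (T : finType) (A : {set T * T}) : rel T := fun x y => (x, y) \in A.

Definition strongly_connected (T : finType) (A : {set T * T}) : bool :=
  [forall u, forall v, connect (arc A) u v].

Fixpoint reach (T : finType) (A : {set T * T}) (k : nat) (u v : T) : bool :=
  if k is k'.+1 then reach A k' u v || [exists w, reach A k' u w && arc A w v]
  else u == v.

(* If v is not reachable
   from u the value is the sentinel #|T| (a shortest path, when it exists, has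
   length <= #|T| - 1); this case never matters for strongly connected D. *)
Definition dist (T : finType) (A : {set T * T}) (u v : T) : nat :=
  find (fun k => reach A k u v) (iota 0 #|T|).

Definition diam (T : finType) (A : {set T * T}) : nat :=
  \max_(p : T * T) dist A p.1 p.2.

(* oriented diameter: minimum of diam(D) over strongly connected orientations
   D of e (default value #|T| ^ 2 if e has none, which never matters here). *)
Definition odiam (T : finType) (e : rel T) : nat :=
  \big[minn/ (#|T| ^ 2)]_(A : {set T * T} | is_orientation e A && strongly_connected A)
     diam A.

Definition lemma2p6_claim (T : finType) (e : rel T) (C : {set T}) : Prop :=
  forall v : T, v \in C -> deg e v = 3 -> (exists2 w, e v w & w \notin C) ->
  exists A : {set T * T},
    [/\ is_orientation e A, strongly_connected A,
        diam A = odiam e, odiam e = #|T| %/ 2 + 1 &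
        forall u : T, maxn (dist A u v) (dist A v u) <= #|T| %/ 2].

Definition edge_rel (n : nat) (E : seq (nat * nat)) : rel 'I_n :=
  fun u v => ((val u, val v) \in E) || ((val v, val u) \in E).

(* K4, vertices a=0, b=1, c=2, x=3; outer cycle abca, interior vertex x. *)
Definition K4_edges : seq (nat * nat) :=
  [:: (0,1); (1,2); (2,0); (3,0); (3,1); (3,2)].
Definition K4 : rel 'I_4 := @edge_rel 4 K4_edges.
Definition K4_outer : {set 'I_4} := [set v : 'I_4 | val v \in [:: 0; 1; 2]].

(* G_6^3, vertices a=0, b=1, c=2, x=3, y=4, z=5; edges
   ab,bc,ca,xa,xb,xc,by,cy,yz,bz; outer cycle a b z y c a; interior x. *)
Definition G63_edges : seq (nat * nat) :=
  [:: (0,1); (1,2); (2,0); (3,0); (3,1); (3,2); (1,4); (2,4); (4,5); (1,5)].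
Definition G63 : rel 'I_6 := @edge_rel 6 G63_edges.
Definition G63_outer : {set 'I_6} := [set v : 'I_6 | val v \in [:: 0; 1; 5; 4; 2]].

From Pilot Require Import Defs.
From mathcomp Require Import all_boot all_order.
(* Re-imported so that [arc] denotes Defs.arc rather than path.arc. *)
Import Defs.
Import Order.TTheory.
Set Implicit Arguments. Unset Strict Implicit. Unset Printing Implicit Defensive.

(* Both graphs are small enough to be settled by computation.  With k = n/2,
   each of the 2^|E| orientations has two vertices at directed distance more
   than k, so the oriented diameter is at least k + 1; an explicit orientation
   of diameter k + 1 in which v reaches and is reached from every vertex within
   k steps gives the matching upper bound.  Distances are evaluated as
   breadth-first balls on vertex indices. *)

Section Distances.
Variables (T : finType) (A : {set T * T}).

Lemma reach_mono i j u v : i <= j -> reach A i u v -> reach A j u v.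
Proof.
elim: j => [|j IHj]; first by rewrite leqn0 => /eqP->.
by rewrite leq_eqVlt => /predU1P[-> //|/IHj r_uv /r_uv] /= ->.
Qed.

Lemma connect_reach k u v : reach A k u v -> connect (arc A) u v.
Proof.
elim: k v => [|k IHk] v /=; first by move/eqP->.
case/orP => [/IHk //|/existsP[w /andP[/IHk uw wv]]].
exact: connect_trans uw (connect1 wv).
Qed.

Lemma dist_leq_reach k u v : k < #|T| -> (dist A u v <= k) = reach A k u v.
Proof.
move=> k_lt; apply/idP/idP => [dist_le|r_uv].
  have : has (fun i => reach A i u v) (iota 0 #|T|).
    by rewrite has_find size_iota (leq_ltn_trans dist_le).
  move=> /(nth_find 0); rewrite nth_iota ?add0n; last first.
    by rewrite (leq_ltn_trans dist_le).
  exact: reach_mono.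
rewrite leqNgt; apply/negP => /(before_find 0).
by rewrite nth_iota // add0n r_uv.
Qed.

Lemma diam_leq_reach k :
  k < #|T| -> (diam A <= k) = [forall u, forall v, reach A k u v].
Proof.
move=> k_lt; apply/bigmax_leqP/forallP => [dist_le u|r_k [u v] _].
  by apply/forallP => v; rewrite -dist_leq_reach // (dist_le (u, v)).
by rewrite dist_leq_reach //; move/forallP: (r_k u) => /(_ v).
Qed.

End Distances.

Lemma odiam_le_diam (T : finType) (e : rel T) A :
  is_orientation e A -> strongly_connected A -> odiam e <= diam A.
Proof.
move=> orA scA; rewrite /odiam -minEnat.
have orscA : is_orientation e A && strongly_connected A by rewrite orA.
exact: (@bigmin_le_cond _ nat _ _ _ _ (@diam T) orscA).
Qed.

Lemma leq_odiam (T : finType) (e : rel T) c : c <= #|T| ^ 2 ->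
  (forall A, is_orientation e A -> c <= diam A) -> c <= odiam e.
Proof.
move=> c_le c_diam; rewrite /odiam.
elim/big_ind: _ => // [x y cx cy | A /andP[/c_diam //]].
by rewrite leq_min cx cy.
Qed.

Lemma odiam_eq_diam (T : finType) (e : rel T) A c :
  is_orientation e A -> strongly_connected A -> diam A <= c -> c <= #|T| ^ 2 ->
  (forall B, is_orientation e B -> c <= diam B) -> diam A = c /\ odiam e = c.
Proof.
move=> orA scA diam_le c_le c_diam.
have c_le_odiam := leq_odiam c_le c_diam.
have odiam_le := leq_trans (odiam_le_diam orA scA) diam_le.
by split; apply/eqP; rewrite eqn_leq ?diam_le ?c_diam ?odiam_le.
Qed.

Lemma has_iota_ord n (P : pred nat) : has P (iota 0 n) = [exists i : 'I_n, P i].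
Proof.
apply/hasP/existsP => [[i] | [i Pi]].
  by rewrite mem_iota add0n => i_lt Pi; exists (Ordinal i_lt).
by exists (val i); rewrite ?mem_iota ?add0n ?ltn_ord.
Qed.

Lemma all_iota_ord n (P : pred nat) : all P (iota 0 n) = [forall i : 'I_n, P i].
Proof.
rewrite -[all _ _]negbK -has_predC has_iota_ord negb_exists.
by apply: eq_forallb => i; rewrite negbK.
Qed.

Section Balls.
Variables (n : nat) (r : rel nat).

Fixpoint ball k u : seq nat :=
  if k is k'.+1 then
    let B := ball k' u in
    [seq x <- iota 0 n | (x \in B) || has (fun w => (w \in B) && r w x) (iota 0 n)]
  else [:: u].

Definition diam_leb k := all (fun u => all (mem (ball k u)) (iota 0 n)) (iota 0 n).

Definition ecc_leb k v := all (fun u => (v \in ball k u) && (u \in ball k v)) (iota 0 n).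

End Balls.

Section BallReach.
Variables (n : nat) (A : {set 'I_n * 'I_n}) (r : rel nat).
Hypothesis arcE : forall x y, arc A x y = r (val x) (val y).

Lemma reach_ball k u v : reach A k u v = (val v \in ball n r k (val u)).
Proof.
elim: k v => [|k IHk] v; first by rewrite /= mem_seq1 eq_sym.
rewrite [reach _ _ _ _]/= [ball _ _ _.+1 _]/= mem_filter mem_iota leq0n add0n ltn_ord.
rewrite !andbT -IHk has_iota_ord; congr (_ || _).
by apply: eq_existsb => w; rewrite IHk arcE.
Qed.

Lemma diam_lebE k : diam_leb n r k = [forall u, forall v, reach A k u v].
Proof.
rewrite /diam_leb all_iota_ord; apply: eq_forallb => u.
by rewrite all_iota_ord; apply: eq_forallb => v; rewrite reach_ball.
Qed.

Lemma ecc_lebE k v : ecc_leb n r k (val v) = [forall u, reach A k u v && reach A k v u].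
Proof.
by rewrite /ecc_leb all_iota_ord; apply: eq_forallb => u; rewrite !reach_ball.
Qed.

End BallReach.

Definition adjb (E : seq (nat * nat)) : rel nat := fun i j => ((i, j) \in E) || ((j, i) \in E).

Definition arcs_rel (D : seq (nat * nat)) : rel nat := fun i j => (i, j) \in D.

Definition arcs_set n (D : seq (nat * nat)) : {set 'I_n * 'I_n} :=
  [set p | arcs_rel D (val p.1) (val p.2)].

Definition orientsb (E D : seq (nat * nat)) : bool :=
  all (fun p => (p \in D) (+) ((p.2, p.1) \in D)) E && all (fun p => adjb E p.1 p.2) D.

Fixpoint orientations (E : seq (nat * nat)) : seq (seq (nat * nat)) :=
  if E is p :: E' then
    [seq p :: D | D <- orientations E'] ++ [seq (p.2, p.1) :: D | D <- orientations E']
  else [:: [::]].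

Lemma arc_arcs_set n D (x y : 'I_n) : arc (arcs_set n D) x y = arcs_rel D (val x) (val y).
Proof. by rewrite /arc inE. Qed.

Lemma arcs_set_orientation n E D :
  orientsb E D -> is_orientation (@edge_rel n E) (arcs_set n D).
Proof.
case/andP => /allP one_way /allP on_edges.
apply/andP; split; apply/forallP => x; apply/forallP => y; rewrite !inE /=.
  by apply/implyP => /on_edges.
apply/implyP => /orP[/one_way // | /one_way /=]; by rewrite addbC.
Qed.

Lemma mem_orientations E (f : pred (nat * nat)) :
  [seq if f p then p else (p.2, p.1) | p <- E] \in orientations E.
Proof. by elim: E => [|p E IHE] //=; case: (f p); rewrite mem_cat (map_f _ IHE) ?orbT. Qed.

Lemma orientation_arcs n E (A : {set 'I_n.+1 * 'I_n.+1}) :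
  is_orientation (edge_rel E) A ->
  exists2 D, D \in orientations E & forall x y, arc A x y = arcs_rel D (val x) (val y).
Proof.
case/andP => /forallP arc_edge /forallP edge_xor.
have {}arc_edge (x y : 'I_n.+1) : arc A x y -> adjb E x y := implyP (forallP (arc_edge x) y).
have {}edge_xor (x y : 'I_n.+1) : adjb E x y -> arc A x y (+) arc A y x :=
  implyP (forallP (edge_xor x) y).
pose f p := arc A (inord p.1) (inord p.2).
exists [seq if f p then p else (p.2, p.1) | p <- E] => [|x y]; first exact: mem_orientations.
apply/idP/mapP => [xy | [[i j] ij_in]].
  have /orP[xy_in | yx_in] := arc_edge _ _ xy.
    by exists (val x, val y); rewrite // /f /= !inord_val xy.
  have : arc A x y (+) arc A y x by rewrite edge_xor // /adjb yx_in orbT.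
  rewrite xy addTb => /negbTE yx.
  by exists (val y, val x); rewrite // /f /= !inord_val yx.
rewrite /f /=; case: ifP => fij [xi yj]; rewrite -{}xi -{}yj !inord_val in ij_in fij => //.
by have := edge_xor y x; rewrite fij /adjb ij_in => /(_ isT).
Qed.

Lemma diam_gt_orientations n E k :
  k < n.+1 -> all (fun D => ~~ diam_leb n.+1 (arcs_rel D) k) (orientations E) ->
  forall A : {set 'I_n.+1 * 'I_n.+1}, is_orientation (edge_rel E) A -> k < diam A.
Proof.
move=> k_lt /allP far A /orientation_arcs[D D_in arcE].
by rewrite ltnNge diam_leq_reach ?card_ord // -(diam_lebE arcE) far.
Qed.

Lemma certified_orientation n E D k (v : 'I_n.+1) :
  k < n ->
  all (fun D' => ~~ diam_leb n.+1 (arcs_rel D') k) (orientations E) ->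
  orientsb E D -> diam_leb n.+1 (arcs_rel D) k.+1 -> ecc_leb n.+1 (arcs_rel D) k v ->
  exists A : {set 'I_n.+1 * 'I_n.+1},
    [/\ is_orientation (@edge_rel n.+1 E) A, strongly_connected A,
        diam A = odiam (@edge_rel n.+1 E), odiam (@edge_rel n.+1 E) = k.+1 &
        forall u, maxn (dist A u v) (dist A v u) <= k].
Proof.
move=> k_lt far orD diamD eccD.
have k_lt_n1 : k < n.+1 := leqW k_lt.
pose A := arcs_set n.+1 D.
have arcE := @arc_arcs_set n.+1 D.
have orA := arcs_set_orientation n.+1 orD.
have reachA : [forall x, forall y, reach A k.+1 x y] by rewrite -(diam_lebE arcE).
have scA : strongly_connected A.
  apply/forallP => x; apply/forallP => y; apply: (@connect_reach _ _ k.+1).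
  by move/forallP: reachA => /(_ x) /forallP.
have diamA : diam A <= k.+1 by rewrite diam_leq_reach ?card_ord.
have k_le_sq : k.+1 <= #|'I_n.+1| ^ 2.
  by rewrite card_ord (leq_trans k_lt_n1) // -{1}(expn1 n.+1) leq_pexp2l.
have [diamAE odiamE] :=
  odiam_eq_diam orA scA diamA k_le_sq (diam_gt_orientations k_lt_n1 far).
exists A; split => //; first by rewrite diamAE odiamE.
move=> u; rewrite geq_max !dist_leq_reach ?card_ord //.
by move: eccD; rewrite (ecc_lebE arcE) => /forallP/(_ u).
Qed.

Lemma lemma2p6_claim_of_witnesses n E (L : seq nat) (W : nat -> seq (nat * nat)) :
  let k := n.+1 %/ 2 in
  k < n ->
  all (fun D => ~~ diam_leb n.+1 (arcs_rel D) k) (orientations E) ->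
  all (fun v => has (fun w => adjb E v w && (w \notin L)) (iota 0 n.+1) ==>
         [&& orientsb E (W v), diam_leb n.+1 (arcs_rel (W v)) k.+1
           & ecc_leb n.+1 (arcs_rel (W v)) k v])
      (iota 0 n.+1) ->
  lemma2p6_claim (edge_rel E) [set v : 'I_n.+1 | val v \in L].
Proof.
move=> k k_lt far witnesses v _ _ [w vw wL].
have hub : has (fun w => adjb E v w && (w \notin L)) (iota 0 n.+1).
  by rewrite has_iota_ord; apply/existsP; exists w; rewrite inE in wL; rewrite wL andbT.
move: witnesses; rewrite all_iota_ord => /forallP/(_ v); rewrite hub /=.
case/and3P => orW diamW eccW.
by rewrite card_ord addn1; apply: certified_orientation k_lt far orW diamW eccW.
Qed.

Definition K4_orientation_ab : seq (nat * nat) :=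
  [:: (1, 0); (2, 1); (0, 2); (0, 3); (3, 1); (2, 3)].
Definition K4_orientation_c : seq (nat * nat) :=
  [:: (1, 0); (2, 1); (0, 2); (3, 0); (1, 3); (2, 3)].
Definition G63_orientation : seq (nat * nat) :=
  [:: (1, 0); (2, 1); (2, 0); (0, 3); (3, 1); (3, 2); (1, 4); (4, 2); (5, 4); (1, 5)].

Theorem lemma2p6 :
  lemma2p6_claim K4 K4_outer /\ lemma2p6_claim G63 G63_outer.
Proof.
split.
  apply: (@lemma2p6_claim_of_witnesses 3 K4_edges [:: 0; 1; 2]
            (fun v => if v == 2 then K4_orientation_c else K4_orientation_ab));
    by vm_compute.
apply: (@lemma2p6_claim_of_witnesses 5 G63_edges [:: 0; 1; 5; 4; 2] (fun=> G63_orientation));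
  by vm_compute.
Qed.
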